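(* Let $f \colon \mathbb{R}^2 \to \mathbb{R}$ be given by $f(u,v) = u^2 + |v|$. Then every BFGS sequence $((u_k,v_k))_{k\ge 0}$ for $f$ has a subsequence converging to a point of the line $\{(u,v) : v = 0\}$.
   Context: A sequence $(x_k)$ in $\mathbb{R}^n$ is a BFGS sequence for $f$ if $f$ is differentiable at each $x_k$ with $\nabla f(x_k) \neq 0$, and there exist parameters $0<\mu<\nu<1$ and a positive definite $n\times n$ matrix $H_0$ such that, with $s_k = x_{k+1}-x_k$, $y_k = \nabla f(x_{k+1}) - \nabla f(x_k)$, $V_k = I - \frac{s_k y_k^T}{s_k^T y_k}$ and $H_{k+1} = V_k H_k V_k^T + \frac{s_k s_k^T}{s_k^T y_k}$, one has for all $k=0,1,2,\dots$: $H_k \nabla f(x_k) \in -\mathbb{R}_+ s_k$, $f(x_{k+1}) \le f(x_k) + \mu \nabla f(x_k)^T s_k$, and $\nabla f(x_{k+1})^T s_k \ge \nu \nabla f(x_k)^T s_k$. *)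

From HB Require Import structures.
From mathcomp Require Import all_boot all_order all_algebra.
From mathcomp Require Import all_classical all_reals all_analysis.
Set Implicit Arguments. Unset Strict Implicit. Unset Printing Implicit Defensive.
Import Order.TTheory GRing.Theory Num.Theory.
Import numFieldNormedType.Exports.
Local Open Scope ring_scope.

Section BFGS.
Variables (R : realType) (n : nat).

(* Gradient of f at x: the column vector of partial derivatives, read off
   from the (Frechet) differential 'd f x on the standard basis. It is
   only meaningful when f is differentiable at x. *)
Definition grad (f : 'cV[R]_n -> R) (x : 'cV[R]_n) : 'cV[R]_n :=
  \col_i ('d f x (delta_mx i 0 : 'cV[R]_n)).

Definition dotv (u v : 'cV[R]_n) : R := (u^T *m v) 0 0.

Definition posdef (H : 'M[R]_n) : Prop :=
  H^T = H /\ forall z : 'cV[R]_n, z != 0 -> 0 < dotv z (H *m z).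

Definition bfgs_update (H : 'M[R]_n) (s y : 'cV[R]_n) : 'M[R]_n :=
  let V := 1%:M - (dotv s y)^-1 *: (s *m y^T) in
  V *m H *m V^T + (dotv s y)^-1 *: (s *m s^T).

Definition bfgs_s (x : nat -> 'cV[R]_n) (k : nat) := x k.+1 - x k.
Definition bfgs_y (f : 'cV[R]_n -> R) (x : nat -> 'cV[R]_n) (k : nat) :=
  grad f (x k.+1) - grad f (x k).

Fixpoint bfgs_H (f : 'cV[R]_n -> R) (x : nat -> 'cV[R]_n) (H0 : 'M[R]_n)
    (k : nat) : 'M[R]_n :=
  match k with
  | 0 => H0
  | k'.+1 => bfgs_update (bfgs_H f x H0 k') (bfgs_s x k') (bfgs_y f x k')
  end.

Definition BFGS_sequence (f : 'cV[R]_n -> R) (x : nat -> 'cV[R]_n) : Prop :=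
  (forall k, differentiable f (x k) /\ grad f (x k) != 0) /\
  exists (mu nu : R) (H0 : 'M[R]_n),
    [/\ 0 < mu, mu < nu, nu < 1, posdef H0 &
    forall k,
      let g := grad f (x k) in
      let s := bfgs_s x k in
      [/\ exists t : R, 0 <= t /\ bfgs_H f x H0 k *m g = - (t *: s),
          f (x k.+1) <= f (x k) + mu * dotv g s &
          dotv (grad f (x k.+1)) s >= nu * dotv g s]].

End BFGS.

Definition f_ex (R : realType) (p : 'cV[R]_2) : R :=
  (p 0 0) ^+ 2 + `|p 1 0|.

From HB Require Import structures.
From mathcomp Require Import all_boot all_order all_algebra.
From mathcomp Require Import all_classical all_reals all_analysis.
From mathcomp Require Import ring lra.
Set Implicit Arguments. Unset Strict Implicit. Unset Printing Implicit Defensive.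
Import Order.TTheory GRing.Theory Num.Theory.
Import numFieldNormedType.Exports.
Local Open Scope classical_set_scope.
Local Open Scope ring_scope.

(* Along any BFGS run the Wolfe condition gives s_k^T y_k > 0, so the
   matrices H_k stay positive definite and every step is a descent step:
   f(x_k) decreases, whence u_k^2 <= f(x_0).  By Bolzano-Weierstrass it then
   suffices that v_k comes arbitrarily close to 0 infinitely often.  If
   instead |v_k| >= e eventually, every sign change of v_k lowers f by at
   least 2 mu e, so the sign of v_k is eventually constant.  From then on
   y_k = (2 s_k^u, 0), which forces (H_{k+1})_00 = 1/2 and makes det H_k
   nondecreasing; with the Wolfe condition this bounds the decrease
   -g_k^T s_k below by 8 (1 - nu) det H_k > 0, contradicting f >= 0. *)

Section QuadraticForms.
Variables (R : realType) (n : nat).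
Implicit Types (u v w z : 'cV[R]_n) (H : 'M[R]_n).

Lemma dotvC u v : dotv u v = dotv v u.
Proof. by rewrite /dotv -[u^T *m v]trmxK trmx_mul trmxK mxE. Qed.

Lemma dotvDr u v w : dotv u (v + w) = dotv u v + dotv u w.
Proof. by rewrite /dotv mulmxDr !mxE. Qed.

Lemma dotvBr u v w : dotv u (v - w) = dotv u v - dotv u w.
Proof. by rewrite /dotv mulmxBr !mxE. Qed.

Lemma dotvZr a u v : dotv u (a *: v) = a * dotv u v.
Proof. by rewrite /dotv -scalemxAr !mxE. Qed.

Lemma dotvNr u v : dotv u (- v) = - dotv u v.
Proof. by rewrite /dotv mulmxN !mxE. Qed.

Lemma dotv_mulmxr u (A : 'M[R]_n) v : dotv u (A *m v) = dotv (A^T *m u) v.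
Proof. by rewrite /dotv trmx_mul trmxK mulmxA. Qed.

Lemma mulmx_dotv u v w : u *m (v^T *m w) = dotv v w *: u.
Proof. by rewrite [v^T *m w]mx11_scalar mul_mx_scalar. Qed.

Lemma bfgs_update_quad H s y z :
  let w := z - ((dotv s y)^-1 * dotv s z) *: y in
  dotv z (bfgs_update H s y *m z) = dotv w (H *m w) + (dotv s y)^-1 * dotv s z ^+ 2.
Proof.
move=> w; rewrite /bfgs_update; set r := (dotv s y)^-1; set V := _ - _.
have VTz : V^T *m z = w.
  rewrite linearB /= trmx1 linearZ /= trmx_mul trmxK mulmxBl mul1mx.
  by rewrite -scalemxAl -mulmxA mulmx_dotv scalerA.
rewrite mulmxDl dotvDr -!mulmxA (dotv_mulmxr z V) VTz.
by rewrite -scalemxAl dotvZr -mulmxA mulmx_dotv dotvZr (dotvC z) -expr2.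
Qed.

Lemma posdef_bfgs_update H s y :
  posdef H -> 0 < dotv s y -> posdef (bfgs_update H s y).
Proof.
move=> [HT Hpos] sy_gt0; split.
  rewrite /bfgs_update; set V := _ - _.
  by rewrite linearD /= [(_ *: _)^T]linearZ /= !trmx_mul !trmxK HT mulmxA.
move=> z z0; rewrite bfgs_update_quad.
set w := z - _; have [sz0|sz0] := eqVneq (dotv s z) 0.
  by rewrite /w sz0 mulr0 scale0r subr0 expr0n mulr0 addr0 Hpos.
apply: ltr_wpDl.
  have [->|w0] := eqVneq w 0; first by rewrite /dotv !mulmx0 mxE.
  exact/ltW/Hpos.
by rewrite mulr_gt0 ?invr_gt0 // exprn_even_gt0.
Qed.

Lemma posdef_descent H g s t :
  posdef H -> g != 0 -> 0 <= t -> H *m g = - (t *: s) -> dotv g s < 0.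
Proof.
move=> [_ Hpos] g0 t0 Hg; have := Hpos g g0.
rewrite Hg dotvNr dotvZr oppr_gt0 => tgs.
by rewrite ltNge; apply/negP => /(mulr_ge0 t0); rewrite leNgt tgs.
Qed.

Lemma wolfe_curvature (nu : R) (g g' s : 'cV[R]_n) :
  nu * dotv g s <= dotv g' s -> (1 - nu) * - dotv g s <= dotv s (g' - g).
Proof. by rewrite dotvBr !(dotvC s) mulrN mulrBl mul1r opprB lerD2r. Qed.

End QuadraticForms.

Section BFGSRun.
Variables (R : realType) (n : nat) (f : 'cV[R]_n -> R) (x : nat -> 'cV[R]_n).
Variables (mu nu : R) (H0 : 'M[R]_n).
Hypotheses (grad_neq0 : forall k, grad f (x k) != 0) (mu_gt0 : 0 < mu)
  (nu_lt1 : nu < 1) (posdef_H0 : posdef H0).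
Hypothesis step : forall k,
  let g := grad f (x k) in
  let s := bfgs_s x k in
  [/\ exists t : R, 0 <= t /\ bfgs_H f x H0 k *m g = - (t *: s),
      f (x k.+1) <= f (x k) + mu * dotv g s &
      dotv (grad f (x k.+1)) s >= nu * dotv g s].

Lemma bfgs_curvature k :
  (1 - nu) * - dotv (grad f (x k)) (bfgs_s x k) <= dotv (bfgs_s x k) (bfgs_y f x k).
Proof. by have [_ _ /wolfe_curvature] := step k. Qed.

Lemma bfgs_descent_of_posdef k :
  posdef (bfgs_H f x H0 k) -> dotv (grad f (x k)) (bfgs_s x k) < 0.
Proof.
move=> Hpd; have [[t [t0 dir]] _ _] := step k.
exact: posdef_descent Hpd (grad_neq0 k) t0 dir.
Qed.

Lemma posdef_bfgs_H k : posdef (bfgs_H f x H0 k).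
Proof.
elim: k => [//|k IH]; apply: posdef_bfgs_update => //.
apply: lt_le_trans (bfgs_curvature k).
by rewrite mulr_gt0 ?subr_gt0 // oppr_gt0 bfgs_descent_of_posdef.
Qed.

Lemma bfgs_descent k : dotv (grad f (x k)) (bfgs_s x k) < 0.
Proof. exact/bfgs_descent_of_posdef/posdef_bfgs_H. Qed.

Lemma bfgs_nonincreasing : nonincreasing_seq (f \o x).
Proof.
apply/nonincreasing_seqP => k /=; have [_ armijo _] := step k.
apply: le_trans armijo _; rewrite gerDl.
by rewrite ltW // pmulr_rlt0 // bfgs_descent.
Qed.

End BFGSRun.

Lemma ord2_lift0 : lift ord0 ord0 = 1 :> 'I_2. Proof. exact: val_inj. Qed.

Lemma ord2_cases (i : 'I_2) : i = 0 \/ i = 1.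
Proof. by case: i => [[|[|k]]] Hk; [left|right|] => //; apply: val_inj. Qed.

Lemma mulmx2 (R : pzSemiRingType) (A : 'M[R]_2) (z : 'cV[R]_2) i :
  (A *m z) i 0 = A i 0 * z 0 0 + A i 1 * z 1 0.
Proof. by rewrite mxE !big_ord_recl big_ord0 ord2_lift0 addr0. Qed.

Lemma det_mx22 (R : comRingType) (A : 'M[R]_2) :
  \det A = A 0 0 * A 1 1 - A 0 1 * A 1 0.
Proof.
rewrite (expand_det_row _ 0) !big_ord_recl big_ord0 /cofactor !det_mx11 !mxE /=.
rewrite ord2_lift0; have -> : lift 1 0 = 0 :> 'I_2 by exact: val_inj.
by rewrite /= expr0 expr1 addr0; ring.
Qed.

Section Plane.
Variable R : realType.
Implicit Types (g s y z : 'cV[R]_2) (H : 'M[R]_2).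

Lemma dotv2 z g : dotv z g = z 0 0 * g 0 0 + z 1 0 * g 1 0.
Proof. by rewrite /dotv mxE !big_ord_recl big_ord0 !mxE ord2_lift0 addr0. Qed.

Lemma posdef2_sym H : posdef H -> H 0 1 = H 1 0.
Proof. by case=> HT _; rewrite -[in LHS]HT mxE. Qed.

Lemma quad2_complete_square H g : H 0 1 = H 1 0 ->
  H 0 0 * dotv g (H *m g) = (H *m g) 0 0 ^+ 2 + \det H * g 1 0 ^+ 2.
Proof. by move=> Hsym; rewrite dotv2 !mulmx2 det_mx22 Hsym; ring. Qed.

Lemma posdef2_det_gt0 H : posdef H -> 0 < \det H.
Proof.
move=> Hpd; have [_ Hpos] := Hpd; have Hsym := posdef2_sym Hpd.
have H00_gt0 : 0 < H 0 0.
  have e0 : delta_mx 0 0 != 0 :> 'cV[R]_2.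
    by apply/negP => /eqP/matrixP/(_ 0 0); rewrite !mxE => /eqP; rewrite oner_eq0.
  by have := Hpos _ e0; rewrite dotv2 !mulmx2 !mxE /= !(mul1r, mul0r, mulr1, mulr0, addr0).
pose g : 'cV[R]_2 := \col_i (if i == 0 then - H 0 1 else H 0 0).
have g0 : g != 0 by apply/negP => /eqP/matrixP/(_ 1 0); rewrite !mxE /= => /eqP; rewrite gt_eqF.
have := quad2_complete_square g Hsym.
rewrite mulmx2 !mxE /= mulrN [H 0 1 * _]mulrC addNr expr0n add0r => gHg.
have := mulr_gt0 H00_gt0 (Hpos g g0).
by rewrite gHg pmulr_lgt0 // exprn_gt0.
Qed.

Lemma bfgs_update2E H s y i j :
  let r := (dotv s y)^-1 in
  let V a b := (a == b)%:R - r * (s a 0 * y b 0) in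
  bfgs_update H s y i j =
    V i 0 * H 0 0 * V j 0 + V i 0 * H 0 1 * V j 1 + V i 1 * H 1 0 * V j 0 +
    V i 1 * H 1 1 * V j 1 + r * (s i 0 * s j 0).
Proof.
move=> r V; rewrite /bfgs_update !mxE.
do 6 rewrite ?big_ord_recl ?big_ord0 ?mxE ?ord2_lift0 /=.
by rewrite /V /r; ring.
Qed.

Section AxisCurvature.
Variables (s y : 'cV[R]_2).
Hypotheses (s0_neq0 : s 0 0 != 0) (y0E : y 0 0 = 2 * s 0 0) (y1E : y 1 0 = 0).

Let dotv_sy : dotv s y = 2 * s 0 0 ^+ 2.
Proof. by rewrite dotv2 y0E y1E mulr0 addr0; ring. Qed.

Lemma bfgs_update_axis00 H : bfgs_update H s y 0 0 = 2^-1.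
Proof. by rewrite bfgs_update2E /= dotv_sy y0E y1E; field. Qed.

Lemma bfgs_update_axis_det H : H 0 1 = H 1 0 -> H 0 0 = 2^-1 ->
  \det H <= \det (bfgs_update H s y).
Proof.
move=> Hsym H00; rewrite -subr_ge0 !det_mx22 !bfgs_update2E /= dotv_sy y0E y1E H00 Hsym.
rewrite (_ : _ - _ = (s 1 0 - 2 * H 1 0 * s 0 0) ^+ 2 / (4 * s 0 0 ^+ 2)); last by field.
by rewrite divr_ge0 ?sqr_ge0 // mulr_ge0 ?sqr_ge0.
Qed.
End AxisCurvature.

Lemma det_le_descent H g s t b :
  H 0 1 = H 1 0 -> H 0 0 = 2^-1 -> g 1 0 ^+ 2 = 1 -> 0 <= t ->
  H *m g = - (t *: s) -> 0 < b -> 0 <= - dotv g s ->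
  b * - dotv g s <= 2 * s 0 0 ^+ 2 -> 8 * b * \det H <= - dotv g s.
Proof.
move=> Hsym H00 g1 t_ge0 dir b_gt0; set a := - dotv g s => a_ge0 curv.
(* Completing the square gives [t a = 2 (t s_0)^2 + 2 det H]; conclude with
   [2 (t s_0)^2 >= b a t^2] and [4 b t (1 - b t) <= 1]. *)
have detE : \det H = 2^-1 * (t * a) - (t * s 0 0) ^+ 2.
  have := quad2_complete_square g Hsym.
  rewrite H00 g1 mulr1 dir dotvNr dotvZr !mxE /a; lra.
have gap : 0 <= 2 * s 0 0 ^+ 2 - b * a by rewrite subr_ge0.
have := mulr_ge0 (mulr_ge0 (ltW b_gt0) (sqr_ge0 t)) gap.
have := mulr_ge0 a_ge0 (sqr_ge0 (1 - 2 * b * t)).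
rewrite detE; nra.
Qed.

End Plane.

Section Sequences.
Variable R : realType.

Lemma nonincreasing_steps_lt (u : R ^nat) (m c : R) :
  nonincreasing_seq u -> (forall k, m <= u k) -> 0 < c ->
  \forall k \near \oo, u k - c < u k.+1.
Proof.
move=> u_dec u_ge c_gt0.
have u_cvg : cvgn u.
  by apply: nonincreasing_is_cvgn => //; exists m => _ [k _ <-].
have lim_le k := nonincreasing_cvgn_ge u_dec u_cvg k.
near=> k; apply: lt_le_trans (lim_le k.+1).
suff : `|limn u - u k| < c by rewrite ltr_norml; lra.
by near: k; apply: cvgr_dist_lt.
Unshelve. all: by end_near.
Qed.

Lemma subseq_cvg_on_axis (x : nat -> 'cV[R]_2) (M : R) :
  (forall k, `|x k 0 0| <= M) ->
  (forall e, 0 < e -> forall N, exists k, (N <= k)%N /\ `|x k 1 0| < e) ->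
  exists (phi : nat -> nat) (p : 'cV[R]_2),
    {homo phi : i j / (i < j)%N >-> (i < j)%N} /\
    (x \o phi) @ \oo --> p /\ p 1 0 = 0.
Proof.
move=> x0_bnd x1_small.
have pick j N : {k | (N <= k)%N /\ `|x k 1 0| < j.+1%:R^-1}.
  by apply: cid; apply: x1_small; rewrite invr_gt0 ltr0n.
pose psi := fix psi j := if j is j'.+1 then sval (pick j (psi j').+1) else sval (pick 0 0)%N.
have psiS j : (psi j < psi j.+1)%N by exact: (proj1 (svalP (pick j.+1 (psi j).+1))).
have psi_small j : `|x (psi j) 1 0| < j.+1%:R^-1.
  by case: j => [|j]; [exact: (proj2 (svalP (pick 0 0%N))) | exact: (proj2 (svalP (pick j.+1 (psi j).+1)))].
have psi_incr : {homo psi : i j / (i < j)%N >-> (i < j)%N}.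
  by apply: homo_ltn psiS => ? ? ?; exact: ltn_trans.
have bnd : bounded_fun (fun j => x (psi j) 0 0).
  exists M; split; first exact: num_real.
  by move=> M' MM' t _ /=; apply: le_trans (x0_bnd _) (ltW MM').
have [f f_incr /cvg_ex [l f_cvg]] := bolzano_weierstrass bnd.
have f_ltn : {homo f : i j / (i < j)%N >-> (i < j)%N} by move=> i j; rewrite (leqW_mono f_incr).
have f_ge t : (t <= f t)%N by elim: t => [|t IH] //; apply: leq_ltn_trans IH (f_ltn _ _ (ltnSn t)).
exists (psi \o f), (\col_i (if i == 0 then l else 0)); split.
  by move=> i j ij; apply/psi_incr/f_ltn.
split; last by rewrite mxE.
apply/cvg_ballP => e e_gt0; move/cvg_ballP: f_cvg => /(_ e e_gt0) f_cvg.
near=> t; split => // i j; rewrite (ord1 j) mxE.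
case: (ord2_cases i) => ->; first by near: t; apply: filterS f_cvg.
rewrite /ball /= sub0r normrN; apply: lt_le_trans (psi_small _) _.
have : e^-1 <= t%:R by near: t; exact: nbhs_infty_ger.
have : t%:R <= (f t)%:R :> R by rewrite ler_nat f_ge.
move=> h1 h2; rewrite -[e]invrK lef_pV2 ?posrE ?invr_gt0 // -natr1; lra.
Unshelve. all: by end_near.
Qed.

End Sequences.

Lemma sgr_change_norm (R : realDomainType) (a b : R) : a != 0 -> Num.sg b != Num.sg a ->
  `|b| - Num.sg a * b = 2 * `|b|.
Proof.
move=> a_neq0 sg_neq.
have [a_gt0|a_lt0|a_eq0] := ltrgt0P a; last by rewrite a_eq0 eqxx in a_neq0.
- have b_le0 : b <= 0 by rewrite leNgt; apply: contra sg_neq => b_gt0; rewrite !gtr0_sg.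
  by rewrite gtr0_sg // ler0_norm //; ring.
- have b_ge0 : 0 <= b by rewrite leNgt; apply: contra sg_neq => b_lt0; rewrite !ltr0_sg.
  by rewrite ltr0_sg // ger0_norm //; ring.
Qed.

Section AbsParabola.
Variable R : realType.
Implicit Types p q : 'cV[R]_2.
Local Notation f := (@f_ex R).

Lemma f_ex_diff_quot0 p h : h != 0 ->
  h^-1 *: ((f \o shift p) (h *: delta_mx 0 0) - f p) = 2 * p 0 0 + h.
Proof. by move=> h0; rewrite /f_ex /= !mxE /= mulr1 mulr0 add0r -[_ *: _]/(_ * _); field. Qed.

Lemma f_ex_diff_quot1 p h :
  h^-1 *: ((f \o shift p) (h *: delta_mx 1 0) - f p) =
  h^-1 * (`|h + p 1 0| - `|p 1 0|).
Proof. by rewrite /f_ex /= !mxE /= mulr1 mulr0 add0r -[_ *: _]/(_ * _); congr (_ * _); ring. Qed.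

Lemma f_ex_differentiable_neq0 p : differentiable f p -> p 1 0 != 0.
Proof.
move=> dfp; apply/negP => /eqP p1.
have /cvg_ex [l /cvgrPdist_lt /(_ 1 ltr01)] := @diff_derivable _ _ _ _ p (delta_mx 1 0) dfp.
rewrite near_withinE => /nbhs_ballP [e /= e_gt0 Hl].
have e2_gt0 : 0 < e / 2 by rewrite divr_gt0.
have e2_neq0 : e / 2 != 0 by rewrite gt_eqF.
have me2_neq0 : - (e / 2) != 0 by rewrite oppr_eq0.
have [he1 he2] : ball 0 e (e / 2) /\ ball 0 e (- (e / 2)).
  by rewrite /ball /= !sub0r !normrN gtr0_norm; lra.
have := Hl _ he1 e2_neq0; have := Hl _ he2 me2_neq0.
rewrite !f_ex_diff_quot1 p1 !addr0 normr0 !subr0 normrN (gtr0_norm e2_gt0).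
rewrite invrN mulNr mulVf // !ltr_norml; lra.
Qed.

Lemma grad_f_ex0 p : differentiable f p -> grad f p 0 0 = 2 * p 0 0.
Proof.
move=> dfp; rewrite /grad mxE -deriveE //; apply: cvg_lim => //.
apply: (@cvg_trans _ ((fun h => 2 * p 0 0 + h) @ 0^')).
  by apply: near_eq_cvg; near=> h; rewrite f_ex_diff_quot0 //; near: h; exact: nbhs_dnbhs_neq.
apply: cvg_within_filter.
have : (fun h => 2 * p 0 0 + h) @ (0 : R) --> 2 * p 0 0 + 0.
  by apply: cvgD; [exact: cvg_cst | exact: cvg_id].
by rewrite addr0.
Unshelve. all: by end_near.
Qed.

Lemma grad_f_ex1 p : differentiable f p -> grad f p 1 0 = Num.sg (p 1 0).
Proof.
move=> dfp; have p1 := f_ex_differentiable_neq0 dfp.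
rewrite /grad mxE -deriveE //; apply: cvg_lim => //; apply: cvg_near_cst.
near=> h; rewrite f_ex_diff_quot1.
have h_neq0 : h != 0 by near: h; exact: nbhs_dnbhs_neq.
suff -> : `|h + p 1 0| - `|p 1 0| = Num.sg (p 1 0) * h by field.
have : `|h| < `|p 1 0| by near: h; apply: dnbhs0_lt; rewrite normr_gt0.
rewrite ltr_norml; have [p1_gt0|p1_lt0|p1_eq0] := ltrgt0P (p 1 0) => hp.
- by rewrite gtr0_sg // !gtr0_norm ?mul1r; [ring | lra].
- by rewrite ltr0_sg // !ltr0_norm; [ring | lra].
- by have := p1; rewrite p1_eq0 eqxx.
Unshelve. all: by end_near.
Qed.

Lemma f_ex_linearization p q : differentiable f p ->
  f q = f p + dotv (grad f p) (q - p) + (q 0 0 - p 0 0) ^+ 2 +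
        (`|q 1 0| - Num.sg (p 1 0) * q 1 0).
Proof.
move=> dfp; rewrite dotv2 grad_f_ex0 // grad_f_ex1 // !mxE /f_ex.
by rewrite [`|p 1 0|]normrEsg; ring.
Qed.

Lemma grad_f_ex_sub p q : differentiable f p -> differentiable f q ->
  Num.sg (q 1 0) = Num.sg (p 1 0) ->
  (grad f q - grad f p) 0 0 = 2 * (q - p) 0 0 /\ (grad f q - grad f p) 1 0 = 0.
Proof.
move=> dfp dfq sg_eq.
have := grad_f_ex0 dfp; have := grad_f_ex1 dfp.
have := grad_f_ex0 dfq; have := grad_f_ex1 dfq.
(* Abstracting the gradients keeps rewriting from unfolding [grad] to compare them. *)
move: (grad f p) (grad f q) => gp gq gq1 gq0 gp1 gp0.
by rewrite !mxE gq0 gq1 gp0 gp1 sg_eq subrr; split=> //; ring.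
Qed.

End AbsParabola.

Section AbsParabolaRun.
Variables (R : realType) (x : nat -> 'cV[R]_2) (mu nu : R) (H0 : 'M[R]_2).
Local Notation f := (@f_ex R).
Hypotheses (diff_x : forall k, differentiable f (x k))
  (grad_neq0 : forall k, grad f (x k) != 0) (mu_gt0 : 0 < mu)
  (nu_lt1 : nu < 1) (posdef_H0 : posdef H0).
Hypothesis step : forall k,
  let g := grad f (x k) in
  let s := bfgs_s x k in
  [/\ exists t : R, 0 <= t /\ bfgs_H f x H0 k *m g = - (t *: s),
      f (x k.+1) <= f (x k) + mu * dotv g s &
      dotv (grad f (x k.+1)) s >= nu * dotv g s].

Local Notation s k := (bfgs_s x k).
Local Notation y k := (bfgs_y f x k).
Local Notation H k := (bfgs_H f x H0 k).
Local Notation a k := (- dotv (grad f (x k)) (bfgs_s x k)).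
Local Notation sigma k := (Num.sg (x k 1 0)).

Let a_gt0 k : 0 < a k.
Proof. rewrite oppr_gt0; exact: bfgs_descent grad_neq0 nu_lt1 posdef_H0 step k. Qed.

Let armijo k : f (x k.+1) <= f (x k) - mu * a k.
Proof. by have [_ decrease _] := step k; rewrite mulrN opprK. Qed.

Let f_ge0 k : 0 <= f (x k).
Proof. by rewrite addr_ge0 ?sqr_ge0. Qed.

Let f_steps_lt c : 0 < c -> \forall k \near \oo, f (x k) - c < f (x k.+1).
Proof.
exact: nonincreasing_steps_lt
  (bfgs_nonincreasing grad_neq0 mu_gt0 nu_lt1 posdef_H0 step) f_ge0.
Qed.

Lemma f_ex_drop_sign_change k : sigma k.+1 != sigma k ->
  f (x k.+1) <= f (x k) - 2 * mu * `|x k.+1 1 0|.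
Proof.
move=> sg_neq; have := f_ex_linearization (x k.+1) (diff_x k).
rewrite sgr_change_norm ?f_ex_differentiable_neq0 // -/(bfgs_s x k) => lin.
have mua_ge0 := mulr_ge0 (ltW mu_gt0) (ltW (a_gt0 k)).
have v_le : 2 * `|x k.+1 1 0| <= a k.
  by have := armijo k; have := sqr_ge0 (x k.+1 0 0 - x k 0 0); lra.
have := ler_wpM2l (ltW mu_gt0) v_le; have := armijo k; lra.
Qed.

Lemma sign_eventually_constant e N : 0 < e ->
  (forall k, (N <= k)%N -> e <= `|x k 1 0|) ->
  exists M, forall k, (M <= k)%N -> sigma k.+1 = sigma k.
Proof.
move=> e_gt0 away.
have two_mu_gt0 : 0 < 2 * mu by rewrite mulr_gt0.
have [N' _ small] := f_steps_lt (mulr_gt0 two_mu_gt0 e_gt0).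
exists (maxn N N') => k; rewrite geq_max => /andP[Nk N'k].
apply/eqP; apply: contraT => /f_ex_drop_sign_change drop.
have := ler_wpM2l (ltW two_mu_gt0) (away _ (leqW Nk)).
have := small k N'k; lra.
Qed.

Lemma sign_kept_curvature k : sigma k.+1 = sigma k ->
  [/\ y k 0 0 = 2 * s k 0 0, y k 1 0 = 0 & (1 - nu) * a k <= 2 * s k 0 0 ^+ 2].
Proof.
move=> sg_eq; have [y0 y1] : y k 0 0 = 2 * s k 0 0 /\ y k 1 0 = 0.
  exact: grad_f_ex_sub (diff_x k) (diff_x k.+1) sg_eq.
split=> //; have := bfgs_curvature step k.
by rewrite [dotv (s k) _]dotv2 y0 y1 mulr0 addr0 mulrCA -expr2.
Qed.

Section SignKept.
Variable M : nat.
Hypothesis sign_kept : forall k, (M <= k)%N -> sigma k.+1 = sigma k.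

Let s0_neq0 k : (M <= k)%N -> s k 0 0 != 0.
Proof.
move=> Mk; have [_ _ curv] := sign_kept_curvature (sign_kept Mk).
apply: contraTneq curv => ->; rewrite expr0n mulr0 -ltNge.
by rewrite mulr_gt0 ?subr_gt0.
Qed.

Lemma bfgs_H00_half k : (M <= k)%N -> H k.+1 0 0 = 2^-1.
Proof.
move=> Mk; have [y0 y1 _] := sign_kept_curvature (sign_kept Mk).
exact: bfgs_update_axis00 (s0_neq0 Mk) y0 y1 (H k).
Qed.

Lemma bfgs_H_det_ge k : (M < k)%N -> \det (H M.+1) <= \det (H k).
Proof.
elim: k => // k IH; rewrite ltnS leq_eqVlt => /predU1P [<- //|Mk].
apply: le_trans (IH Mk) _; have Mk' := ltnW Mk.
have [y0 y1 _] := sign_kept_curvature (sign_kept Mk').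
apply: (bfgs_update_axis_det (s0_neq0 Mk') y0 y1 (H := H k)).
  exact: posdef2_sym (posdef_bfgs_H grad_neq0 nu_lt1 posdef_H0 step k).
by case: k Mk {IH Mk' y0 y1} => // k; rewrite ltnS => /bfgs_H00_half.
Qed.

Lemma bfgs_descent_ge_det k : (M < k)%N -> 8 * (1 - nu) * \det (H M.+1) <= a k.
Proof.
move=> Mk; have [_ _ curv] := sign_kept_curvature (sign_kept (ltnW Mk)).
have [[t [t_ge0 dir]] _ _] := step k.
have Hsym := posdef2_sym (posdef_bfgs_H grad_neq0 nu_lt1 posdef_H0 step k).
have H00 : H k 0 0 = 2^-1.
  by case: k Mk {curv dir Hsym} => // k; rewrite ltnS => /bfgs_H00_half.
have g1 : grad f (x k) 1 0 ^+ 2 = 1.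
  by rewrite grad_f_ex1 // sqr_sg f_ex_differentiable_neq0.
have b_gt0 : 0 < 1 - nu by rewrite subr_gt0.
apply: le_trans (det_le_descent Hsym H00 g1 t_ge0 dir b_gt0 (ltW (a_gt0 k)) curv).
by apply: ler_wpM2l; [rewrite mulr_ge0 ?ltW | exact: bfgs_H_det_ge].
Qed.

End SignKept.

Lemma frequently_near_axis e : 0 < e -> forall N, exists k, (N <= k)%N /\ `|x k 1 0| < e.
Proof.
move=> e_gt0 N; apply: contrapT => no_small.
have away k : (N <= k)%N -> e <= `|x k 1 0|.
  by move=> Nk; rewrite leNgt; apply/negP => small; apply: no_small; exists k.
have [M sign_kept] := sign_eventually_constant e_gt0 away.
have det_gt0 := posdef2_det_gt0 (posdef_bfgs_H grad_neq0 nu_lt1 posdef_H0 step M.+1).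
have c_gt0 : 0 < 8 * (1 - nu) * \det (H M.+1) by rewrite !mulr_gt0 ?subr_gt0.
have [N' _ small] := f_steps_lt (mulr_gt0 mu_gt0 c_gt0).
have := small _ (leq_maxl N' M.+1); have := armijo (maxn N' M.+1).
have := ler_wpM2l (ltW mu_gt0) (bfgs_descent_ge_det sign_kept (leq_maxr N' M.+1)); lra.
Qed.

Lemma first_coord_bounded k : `|x k 0 0| <= 1 + f (x 0).
Proof.
have f_le : f (x k) <= f (x 0).
  exact: bfgs_nonincreasing grad_neq0 mu_gt0 nu_lt1 posdef_H0 step 0 k (leq0n k).
have u2_le : `|x k 0 0| ^+ 2 <= f (x k) by rewrite real_normK ?num_real // lerDl.
have := normr_ge0 (x k 0 0); nra.
Qed.

End AbsParabolaRun.

Theorem corollary4p4 (R : realType) (x : nat -> 'cV[R]_2) :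
  BFGS_sequence (@f_ex R) x ->
  exists (phi : nat -> nat) (p : 'cV[R]_2),
    {homo phi : i j / (i < j)%N >-> (i < j)%N} /\
    (x \o phi) @ \oo --> p /\ p 1 0 = 0.
Proof.
move=> [diff_grad [mu [nu [H0 [mu_gt0 _ nu_lt1 posdef_H0 step]]]]].
have diff_x k := (diff_grad k).1; have grad_neq0 k := (diff_grad k).2.
apply: (@subseq_cvg_on_axis _ _ (1 + f_ex (x 0))).
- exact: first_coord_bounded grad_neq0 mu_gt0 nu_lt1 posdef_H0 step.
- exact: frequently_near_axis diff_x grad_neq0 mu_gt0 nu_lt1 posdef_H0 step.
Qed.
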